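(* Let $k\ge 1$ and let $\lambda=(\lambda_1,\ldots,\lambda_k)$ be a partition with at most $k$ nonzero parts (trailing zeros allowed). Define $\mu=(\mu_1,\ldots,\mu_k)$ by $\mu_1=\lambda_1$ and $\mu_i=\min\{\mu_{i-1},\lambda_i+(i-1)\}$ for $1<i\le k$. Then $\mu$ is the unique partition that is maximal for $\lambda$.
   Context: A partition is a weakly decreasing sequence of nonnegative integers; $\mathcal P_k$ denotes the set of partitions of length at most $k$ (length = number of nonzero parts), written as sequences of length $k$. Partitions are identified with their Young diagrams (English convention, $(i,j)$ is the $j$th box of row $i$); $|\lambda|=\sum_i\lambda_i$. For $\lambda,\mu\in\mathcal P_k$ with $\lambda\subseteq\mu$, ${\sf Tab}(\mu/\lambda)$ is the set of fillings of the boxes of the skew shape $\mu/\lambda$ with entries in $\{1,\ldots,k\}$ such that entries strictly increase left to right in each row, strictly increase top to bottom in each column, and every entry in row $i$ is at most $i-1$ (for each $i\in\{1,\ldots,k\}$). A partition $\mu\in\mathcal P_k$ with $\lambda\subseteq\mu$ is called maximal for $\lambda$ if ${\sf Tab}(\mu/\lambda)\neq\emptyset$ and ${\sf Tab}(\nu/\lambda)=\emptyset$ for every $\nu\in\mathcal P_k$ with $\lambda\subseteq\nu$ and $|\nu|>|\mu|$. *)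

From mathcomp Require Import all_boot.
Set Implicit Arguments. Unset Strict Implicit. Unset Printing Implicit Defensive.

(* Conventions: a partition in P_k is a seq nat of size k, weakly decreasing.
   Rows and columns are 0-indexed: paper row i (1-based) is row i-1 here,
   paper box (i,j) is box (i-1, j-1) here. *)

Definition is_part (k : nat) (s : seq nat) : Prop :=
  size s = k /\ sorted geq s.

Definition part_sub (k : nat) (lam mu : seq nat) : Prop :=
  forall i, i < k -> nth 0 lam i <= nth 0 mu i.

Definition in_skew (k : nat) (lam mu : seq nat) (i j : nat) : Prop :=
  i < k /\ nth 0 lam i <= j /\ j < nth 0 mu i.

Definition is_tab (k : nat) (lam mu : seq nat) (T : nat -> nat -> nat) : Prop :=
  (forall i j, in_skew k lam mu i j -> 1 <= T i j <= k) /\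
  (* entries in (1-based) row i+1 are at most i *)
  (forall i j, in_skew k lam mu i j -> T i j <= i) /\
  (forall i j j', in_skew k lam mu i j -> in_skew k lam mu i j' -> j < j' ->
     T i j < T i j') /\
  (forall i i' j, in_skew k lam mu i j -> in_skew k lam mu i' j -> i < i' ->
     T i j < T i' j).

Definition tab_nonempty (k : nat) (lam mu : seq nat) : Prop :=
  exists T : nat -> nat -> nat, is_tab k lam mu T.

Definition maximal_for (k : nat) (lam mu : seq nat) : Prop :=
  is_part k mu /\ part_sub k lam mu /\ tab_nonempty k lam mu /\
  forall nu, is_part k nu -> part_sub k lam nu -> sumn mu < sumn nu ->
    ~ tab_nonempty k lam nu.

(* mu_0 = lam_0, mu_i = min(mu_{i-1}, lam_i + i)  (0-indexed; paper: lam_i + (i-1)) *)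
Fixpoint mu_rec (lam : seq nat) (i : nat) : nat :=
  match i with
  | 0 => nth 0 lam 0
  | i'.+1 => minn (mu_rec lam i') (nth 0 lam i'.+1 + i'.+1)
  end.

Definition mu_of (k : nat) (lam : seq nat) : seq nat := mkseq (mu_rec lam) k.

From mathcomp Require Import all_boot.
From mathcomp Require Import zify.
Set Implicit Arguments.
Unset Strict Implicit.
Unset Printing Implicit Defensive.

(* Row i (0-indexed) of a tableau in Tab(nu/lam) is a strictly increasing
   sequence of positive entries bounded by i, so it has at most i boxes:
   nu_i <= lam_i + i.  As nu is a partition, nu_i <= nu_(i-1) as well, hence
   by induction nu <= mu entrywise, and |nu| <= |mu| with equality only for
   nu = mu.  Conversely mu/lam is filled by right-justifying in row i the
   entries ..., i-1, i, i.e. T(i,j) = i + 1 + j - mu_i; columns increase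
   because mu is weakly decreasing. *)

Lemma nth_sorted_geqS (s : seq nat) i : sorted geq s -> nth 0 s i.+1 <= nth 0 s i.
Proof.
move=> /(sortedP 0) s_geq; case: (ltnP i.+1 (size s)) => [/s_geq //|s_le].
by rewrite nth_default.
Qed.

Lemma incr_bounded_leq (f : nat -> nat) (n m : nat) :
  (forall t, t < n -> 0 < f t <= m) ->
  (forall t, t.+1 < n -> f t < f t.+1) -> n <= m.
Proof.
move=> f_range f_incr.
have lt_f : forall t, t < n -> t < f t.
  elim=> [/f_range /andP[] //|t IHt lt_tn].
  by apply: leq_trans (f_incr t lt_tn); apply: IHt; apply: ltnW.
case: n f_range lt_f {f_incr} => // n f_range lt_f.
by have /andP[_ le_fm] := f_range n (ltnSn n); apply: leq_trans (lt_f n _) le_fm.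
Qed.

Lemma leq_sumn_nth (s t : seq nat) : size s = size t ->
  (forall i, i < size s -> nth 0 s i <= nth 0 t i) -> sumn s <= sumn t.
Proof.
elim: s t => [|a s IH] [|b t] //= [size_st] le_st.
by apply: leq_add; [exact: le_st 0 _ | exact: IH (fun i => le_st i.+1)].
Qed.

Lemma eq_sumn_nth (s t : seq nat) : size s = size t ->
  (forall i, i < size s -> nth 0 s i <= nth 0 t i) -> sumn t <= sumn s -> s = t.
Proof.
elim: s t => [|a s IH] [|b t] //= [size_st] le_st le_sum.
have le_ab : a <= b := le_st 0 erefl.
have le_sum_st : sumn s <= sumn t := leq_sumn_nth size_st (fun i => le_st i.+1).
have -> : a = b by lia.
by congr (_ :: _); apply: IH size_st (fun i => le_st i.+1) _; lia.
Qed.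

Section MuOf.

Variable lam : seq nat.

Lemma mu_recS_le i : mu_rec lam i.+1 <= mu_rec lam i.
Proof. exact: geq_minl. Qed.

Lemma mu_rec_nonincr i i' : i <= i' -> mu_rec lam i' <= mu_rec lam i.
Proof.
apply: (homo_leq (r := fun a b => b <= a)) => [//|b a c le_ba le_cb|j].
  exact: leq_trans le_cb le_ba.
exact: mu_recS_le.
Qed.

Lemma mu_rec_le_addn i : mu_rec lam i <= nth 0 lam i + i.
Proof. by case: i => [|i]; [rewrite addn0 | exact: geq_minr]. Qed.

Lemma nth_le_mu_rec i : sorted geq lam -> nth 0 lam i <= mu_rec lam i.
Proof.
move=> lam_geq; elim: i => [//|i IH] /=.
by rewrite leq_min leq_addr (leq_trans (nth_sorted_geqS i lam_geq) IH).
Qed.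

Variable k : nat.

Lemma mu_of_part : is_part k (mu_of k lam).
Proof.
split; first exact: size_mkseq.
apply/(sortedP 0) => i; rewrite size_mkseq => lt_ik.
rewrite !nth_mkseq //; [exact: mu_recS_le | exact: ltnW].
Qed.

Lemma mu_of_tab : tab_nonempty k lam (mu_of k lam).
Proof.
exists (fun i j => i.+1 + j - mu_rec lam i).
have box_range i j : in_skew k lam (mu_of k lam) i j ->
    [/\ i < k, nth 0 lam i <= j, j < mu_rec lam i & mu_rec lam i <= nth 0 lam i + i].
  move=> [lt_ik [lam_le_j]]; rewrite nth_mkseq // => lt_j_mu.
  by split=> //; apply: mu_rec_le_addn.
split; [|split; [|split]].
- by move=> i j /box_range[]; lia.
- by move=> i j /box_range[]; lia.
- by move=> i j j' /box_range[? ? ? ?] /box_range[]; lia.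
- move=> i i' j /box_range[? ? ? ?] /box_range[? ? ? ?] lt_ii'.
  by have := mu_rec_nonincr (ltnW lt_ii'); lia.
Qed.

Lemma mu_of_sub : is_part k lam -> part_sub k lam (mu_of k lam).
Proof. by move=> [_ lam_geq] i lt_ik; rewrite nth_mkseq ?nth_le_mu_rec. Qed.

End MuOf.

Section TabBound.

Variables (k : nat) (lam nu : seq nat).

Lemma tab_row_le T i : is_tab k lam nu T -> i < k ->
  nth 0 nu i <= nth 0 lam i + i.
Proof.
move=> [T_range [T_row [T_incr _]]] lt_ik; rewrite -leq_subLR.
have box t : t < nth 0 nu i - nth 0 lam i -> in_skew k lam nu i (nth 0 lam i + t).
  by move=> lt_t; split=> //; split; [exact: leq_addr | lia].
apply: (@incr_bounded_leq (fun t => T i (nth 0 lam i + t))) => t lt_t.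
  have /andP[T_pos _] := T_range _ _ (box t lt_t).
  by rewrite T_pos T_row //; exact: box.
by apply: T_incr; [apply: box; lia | exact: box | lia].
Qed.

Lemma tab_le_mu_of : is_part k nu -> tab_nonempty k lam nu ->
  forall i, i < k -> nth 0 nu i <= nth 0 (mu_of k lam) i.
Proof.
move=> [_ nu_geq] [T tabT] i lt_ik; rewrite nth_mkseq //.
elim: i lt_ik => [|i IH] lt_ik.
  by have := tab_row_le tabT lt_ik; rewrite addn0.
rewrite /= leq_min (tab_row_le tabT lt_ik) andbT.
exact: leq_trans (nth_sorted_geqS i nu_geq) (IH (ltnW lt_ik)).
Qed.

End TabBound.

Theorem lemma3p4 (k : nat) (lam : seq nat) :
  1 <= k -> is_part k lam ->
  maximal_for k lam (mu_of k lam) /\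
  (forall nu, maximal_for k lam nu -> nu = mu_of k lam).
Proof.
move=> _ lam_part.
have mu_dominates nu : is_part k nu -> tab_nonempty k lam nu ->
    size nu = size (mu_of k lam) /\
    forall i, i < size nu -> nth 0 nu i <= nth 0 (mu_of k lam) i.
  move=> nu_part nu_tab; have [size_nu _] := nu_part.
  by rewrite size_mkseq size_nu; split=> //; apply: tab_le_mu_of.
split.
  split; [exact: mu_of_part | split; [exact: mu_of_sub | split; [exact: mu_of_tab |]]].
  move=> nu nu_part _ lt_sum nu_tab.
  have [size_eq le_nth] := mu_dominates nu nu_part nu_tab.
  by have := leq_sumn_nth size_eq le_nth; rewrite leqNgt lt_sum.
move=> nu [nu_part [_ [nu_tab nu_max]]].
have [size_eq le_nth] := mu_dominates nu nu_part nu_tab.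
apply: eq_sumn_nth size_eq le_nth _; rewrite leqNgt; apply/negP => lt_sum.
exact: nu_max _ (mu_of_part lam k) (@mu_of_sub _ _ lam_part) lt_sum (mu_of_tab lam k).
Qed.
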